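(* If $\phi\in C(\mathbb{Z}_p,\mathbb{C}_p)$ and $y,s\in\mathbb{Z}_p$, then $T(S^y(\phi))(s)=T(\phi)(s+y)$.
   Context: Fix a prime $p$. $\mathbb{C}_p$ denotes the completion of an algebraic closure of $\mathbb{Q}_p$, with absolute value $|\cdot|$ normalized by $|p|=1/p$. $C(\mathbb{Z}_p,\mathbb{C}_p)$ is the $\mathbb{C}_p$-Banach space of continuous functions $\mathbb{Z}_p\to\mathbb{C}_p$ with the sup-norm $\|\cdot\|$. For $n\in\mathbb{Z}_{\ge0}$ and $x\in\mathbb{Z}_p$, $\binom{x}{n}=x(x-1)\cdots(x-n+1)/n!$. For $y\in\mathbb{Z}_p$ and $\phi\in C(\mathbb{Z}_p,\mathbb{C}_p)$ define $S^y(\phi)\in C(\mathbb{Z}_p,\mathbb{C}_p)$ by $S^y(\phi)(x)=\sum_{k\ge0}(-1)^k k!\binom yk\binom xk\phi(x-k)$. Define $T(\phi):\mathbb{Z}_p\to\mathbb{C}_p$ by $T(\phi)(y)=S^y(\phi)(-1)=\sum_{k\ge0}k!\,\phi(-1-k)\binom{y}{k}$. *)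

From HB Require Import structures.
From mathcomp Require Import all_boot all_order all_algebra.
From mathcomp Require Import reals.
From Stdlib Require Import ClassicalEpsilon.
Set Implicit Arguments. Unset Strict Implicit. Unset Printing Implicit Defensive.
Import Order.TTheory GRing.Theory Num.Theory.
Local Open Scope ring_scope.

(* We characterise it axiomatically
   (up to isometric isomorphism) as a pair (K, nu): K an algebraically closed
   field, nu : K -> R a non-archimedean absolute value with nu p = 1/p,
   K complete for nu, and the elements of K algebraic over Q dense in K.
   These properties determine C_p (the completion of an algebraic closure
   of Q_p) up to isometric isomorphism. *)

Section Defs.
Variables (K : closedFieldType) (R : realType) (nu : K -> R).

Definition nu_cauchy (u : nat -> K) : Prop :=
  forall e : R, 0 < e -> exists N : nat,
    forall m n : nat, (N <= m)%N -> (N <= n)%N -> nu (u m - u n) < e.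

Definition nu_lim (u : nat -> K) (l : K) : Prop :=
  forall e : R, 0 < e -> exists N : nat, forall n : nat, (N <= n)%N -> nu (l - u n) < e.

Record is_Cp (p : nat) : Prop := {
  nu_ge0 : forall x, 0 <= nu x;
  nu_eq0 : forall x, nu x = 0 <-> x = 0;
  nuM : forall x y, nu (x * y) = nu x * nu y;
  nu_ultra : forall x y, nu (x + y) <= Num.max (nu x) (nu y);
  nu_p : nu (p%:R) = (p%:R)^-1;
  nu_complete : forall u, nu_cauchy u -> exists l, nu_lim u l;
  nu_alg_dense : forall (x : K) (e : R), 0 < e ->
     exists (a : K) (q : {poly rat}), q != 0 /\ root (map_poly ratr q) a /\ nu (x - a) < e
}.

(* Z_p inside C_p: the closure of Z *)
Definition isZp (x : K) : Prop :=
  forall e : R, 0 < e -> exists n : int, nu (x - n%:~R) < e.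

(* continuity on Z_p (functions Z_p -> C_p are represented as K -> K;
   only their values on Z_p matter) *)
Definition contZp (phi : K -> K) : Prop :=
  forall x, isZp x -> forall e : R, 0 < e -> exists2 d : R, 0 < d &
    forall z, isZp z -> nu (z - x) < d -> nu (phi z - phi x) < e.

Definition series_to (a : nat -> K) (l : K) : Prop :=
  nu_lim (fun n => \sum_(k < n) a k) l.

Definition ssum (a : nat -> K) : K := epsilon (inhabits 0) (series_to a).

Definition binomK (x : K) (k : nat) : K :=
  (\prod_(i < k) (x - i%:R)) / (k`!)%:R.

Definition S_op (y : K) (phi : K -> K) : K -> K := fun x =>
  ssum (fun k => (-1) ^+ k * (k`!)%:R * binomK y k * binomK x k * phi (x - k%:R)).

Definition T_op (phi : K -> K) : K -> K := fun y =>
  ssum (fun k => (k`!)%:R * phi (-1 - k%:R) * binomK y k).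

End Defs.

From HB Require Import structures.
From mathcomp Require Import all_boot all_order all_algebra.
From mathcomp Require Import reals.
From mathcomp Require Import ring.
From Stdlib Require Import ClassicalEpsilon FunctionalExtensionality Classical.
Set Implicit Arguments. Unset Strict Implicit. Unset Printing Implicit Defensive.
Import Order.TTheory GRing.Theory Num.Theory.
Local Open Scope ring_scope.

(* Since k! (-1)^j j! C(-1-k, j) = (k+j)!, the summands of T(S^y phi)(s) are
     k! S^y(phi)(-1-k) C(s,k) = sum_j (k+j)! phi(-1-k-j) C(y,j) C(s,k).
   Summing this double series along the antidiagonals k + j = n and applying
   Vandermonde's identity sum_i C(s,i) C(y,n-i) = C(s+y,n) gives T(phi)(s+y).
   The rearrangement is legitimate in the ultrametric field C_p because
   n! phi(-1-n) -> 0 (|n!| -> 0, and phi is bounded on the compact Z_p) while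
   |C(x,k)| <= 1 for x in Z_p. *)

Section FallingFactorial.
Variable K : closedFieldType.

Definition falling (x : K) n := \prod_(i < n) (x - i%:R).

Lemma falling0 x : falling x 0 = 1.
Proof. exact: big_ord0. Qed.

Lemma fallingS x n : falling x n.+1 = falling x n * (x - n%:R).
Proof. exact: big_ord_recr. Qed.

Lemma falling_nat n k : falling n%:R k = (n ^_ k)%:R.
Proof.
elim: k => [|k IH]; first by rewrite falling0 ffactn0.
rewrite fallingS IH ffactnSr.
have [kn|nk] := leqP k n; first by rewrite natrM natrB.
by rewrite ffact_small // !mul0r.
Qed.

Lemma falling_vandermonde s y n :
  falling (s + y) n = \sum_(i < n.+1) 'C(n, i)%:R * falling s i * falling y (n - i)%N.
Proof.
elim: n => [|n IH]; first by rewrite big_ord1 bin0 subnn !falling0 !mul1r.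
pose L i := 'C(n, i)%:R * falling s i.+1 * falling y (n - i)%N.
pose U i := 'C(n, i)%:R * falling s i * falling y (n - i).+1.
have split_term (i : 'I_n.+1) : 'C(n, i)%:R * falling s i * falling y (n - i)%N *
    (s + y - n%:R) = L i + U i.
  have hi : (i <= n)%N by rewrite -ltnS.
  by rewrite /L /U !fallingS -[in n%:R](subnKC hi) natrD; ring.
pose D := \sum_(i < n) 'C(n, i.+1)%:R * falling s i.+1 * falling y (n - i)%N.
have sumU : \sum_(i < n.+1) U i = falling y n.+1 + D.
  rewrite big_ord_recl /U bin0 falling0 subn0 !mul1r; congr (_ + _).
  by apply: eq_bigr => i _; rewrite lift0 subnSK.
have pascal (i : 'I_n.+1) : 'C(n.+1, i.+1)%:R * falling s i.+1 * falling y (n.+1 - i.+1)%N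
    = L i + 'C(n, i.+1)%:R * falling s i.+1 * falling y (n - i)%N.
  by rewrite /L binS natrD subSS !mulrDl addrC.
rewrite fallingS IH mulr_suml (eq_bigr _ (fun i _ => split_term i)) big_split /= sumU.
rewrite [RHS]big_ord_recl /= bin0 falling0 subn0 !mul1r.
rewrite (eq_bigr _ (fun i _ => pascal i)) big_split /= [X in _ = _ + (_ + X)]big_ord_recr /=.
by rewrite bin_small // !mul0r addr0 -/D; ring.
Qed.

Lemma fallingN1 k j : (-1) ^+ j * falling (-1 - k%:R) j * k`!%:R = (k + j)`!%:R.
Proof.
elim: j => [|j IH]; first by rewrite expr0 falling0 !mul1r addn0.
by rewrite addnS factS exprS fallingS natrM -IH -addn1 !natrD; ring.
Qed.

Hypothesis K_char0 : has_char0 K.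

Lemma natf_fact_neq0 n : n`!%:R != 0 :> K.
Proof. by move/pcharf0P: K_char0 => ->; rewrite -lt0n fact_gt0. Qed.

Lemma binomK_nat n k : binomK (n%:R : K) k = 'C(n, k)%:R.
Proof.
by rewrite /binomK -/(falling _ _) falling_nat -bin_ffact natrM mulfK ?natf_fact_neq0.
Qed.

Lemma binomK_vandermonde s y n :
  binomK (s + y : K) n = \sum_(i < n.+1) binomK s i * binomK y (n - i)%N.
Proof.
rewrite /binomK -/(falling _ _) falling_vandermonde mulr_suml.
apply: eq_bigr => i _; have hi : (i <= n)%N by rewrite -ltnS.
rewrite -/(falling _ _) -/(falling _ _) -(bin_fact hi) !natrM.
have Cni : 'C(n, i)%:R != 0 :> K by move/pcharf0P: K_char0 => ->; rewrite -lt0n bin_gt0.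
by field; rewrite Cni !natf_fact_neq0.
Qed.

Lemma fact_binomKN1 k j :
  k`!%:R * ((-1) ^+ j * j`!%:R * binomK (-1 - k%:R : K) j) = (k + j)`!%:R.
Proof.
rewrite -fallingN1 /binomK -/(falling _ _).
by field; rewrite natf_fact_neq0.
Qed.

End FallingFactorial.

Section UnboundedResidueClasses.
Variables (R : realDomainType) (a : nat -> R).

Definition unbounded_on_class q c := forall M : R, exists n, (n %% q = c)%N /\ M < a n.

Lemma unbounded_on_class_lt q c : (0 < q)%N -> unbounded_on_class q c -> (c < q)%N.
Proof. by move=> q0 /(_ 0) [n [<- _]]; rewrite ltn_mod. Qed.

Lemma uniform_bound (P : nat -> R -> Prop) :
  (forall d M M', P d M -> M <= M' -> P d M') ->
  (forall d, exists M, P d M) -> forall B, exists M, forall d, (d < B)%N -> P d M.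
Proof.
move=> mono h; elim => [|B [M HM]]; first by exists 0.
have [M' HM'] := h B; exists (Num.max M M') => d; rewrite ltnS leq_eqVlt.
case/orP => [/eqP ->|dB]; first by apply: mono HM' _; rewrite le_max lexx orbT.
by apply: mono (HM d dB) _; rewrite le_max lexx.
Qed.

Lemma unbounded_on_class_refine q q' c : (q %| q')%N -> (0 < q')%N ->
  unbounded_on_class q c -> exists d, (d %% q = c)%N /\ unbounded_on_class q' d.
Proof.
move=> qq' q'0 unb; apply: NNPP => no_refinement.
pose P d M := (d %% q = c)%N -> forall n, (n %% q' = d)%N -> a n <= M.
have bounded d : exists M, P d M.
  apply: NNPP => unb_d; apply: no_refinement; exists d; split.
    by apply: NNPP => dc; apply: unb_d; exists 0 => /dc.
  move=> M; apply: NNPP => hM; apply: unb_d; exists M => _ n hn.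
  by rewrite leNgt; apply/negP => lt; apply: hM; exists n.
have mono d M M' : P d M -> M <= M' -> P d M'.
  by move=> h MM' dc n hn; apply: le_trans MM'; apply: h.
have [M HM] := uniform_bound mono bounded q'.
have [n [nc lt_M]] := unb M.
have := HM (n %% q')%N; rewrite ltn_mod q'0 /P modn_dvdm // => /(_ isT nc n erefl).
by rewrite leNgt lt_M.
Qed.

Lemma unbounded_nested_classes q : (1 < q)%N -> (forall M, exists n, M < a n) ->
  exists cs : nat -> nat, (forall m, unbounded_on_class (q ^ m) (cs m)) /\
    (forall m m', (m <= m')%N -> cs m' = cs m %[mod q ^ m]).
Proof.
move=> q1 unb.
pose next m c := epsilon (inhabits 0%N)
  (fun d => (d %% q ^ m = c)%N /\ unbounded_on_class (q ^ m.+1) d).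
pose cs := nat_rect (fun _ => nat) 0%N next.
have next_spec m : unbounded_on_class (q ^ m) (cs m) ->
    (cs m.+1 %% q ^ m = cs m)%N /\ unbounded_on_class (q ^ m.+1) (cs m.+1).
  move=> hm; apply: (epsilon_spec (inhabits 0%N)
    (fun d => (d %% q ^ m = cs m)%N /\ unbounded_on_class (q ^ m.+1) d)).
  apply: unbounded_on_class_refine hm; first exact: dvdn_exp2l.
  by rewrite expn_gt0 ltnW.
have cs_unb m : unbounded_on_class (q ^ m) (cs m).
  elim: m => [|m IH]; last exact: (next_spec m IH).2.
  by move=> M; have [n hn] := unb M; exists n; rewrite expn0 modn1.
exists cs; split => // m; elim => [|m' IH]; first by rewrite leqn0 => /eqP ->.
rewrite leq_eqVlt => /orP [/eqP <- //|]; rewrite ltnS => le_mm'.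
by rewrite -(IH le_mm') -[in RHS](next_spec m' (cs_unb m')).1 modn_dvdm // dvdn_exp2l.
Qed.
End UnboundedResidueClasses.

Lemma intr_Negz (V : pzRingType) n : (Negz n)%:~R = -1 - n%:R :> V.
Proof.
rewrite NegzE mulrNz; change (- (n.+1%:R : V) = -1 - n%:R).
by rewrite -addn1 natrD opprD addrC.
Qed.

Section Valuation.
Variables (p : nat) (K : closedFieldType) (R : realType) (nu : K -> R).
Hypotheses (p_prime : prime p) (hK : is_Cp nu p).

Lemma nu0 : nu 0 = 0.
Proof. exact/(nu_eq0 hK). Qed.

Lemma nu1 : nu 1 = 1.
Proof.
have n1 : nu 1 != 0 by apply/eqP => /(nu_eq0 hK)/eqP; rewrite oner_eq0.
by apply: (mulfI n1); rewrite -(nuM hK) !mulr1.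
Qed.

Lemma nuN1 : nu (-1) = 1.
Proof.
apply/eqP; rewrite -(pexpr_eq1 (n := 2)) ?(nu_ge0 hK) //.
by rewrite expr2 -(nuM hK) mulrNN mulr1 nu1.
Qed.

Lemma nuN x : nu (- x) = nu x.
Proof. by rewrite -mulN1r (nuM hK) nuN1 mul1r. Qed.

Lemma nu_distC x y : nu (x - y) = nu (y - x).
Proof. by rewrite -nuN opprB. Qed.

Lemma nuX x m : nu (x ^+ m) = nu x ^+ m.
Proof. by elim: m => [|m IH]; rewrite ?nu1 // !exprS (nuM hK) IH. Qed.

Lemma nuV x : nu x^-1 = (nu x)^-1.
Proof.
have [->|x0] := eqVneq x 0; first by rewrite invr0 nu0 invr0.
have nx0 : nu x != 0 by apply: contraNneq x0 => /(nu_eq0 hK) ->.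
by apply: (mulfI nx0); rewrite -(nuM hK) !mulfV ?nu1.
Qed.

Lemma nu_mull_le1 a u : nu u <= 1 -> nu (a * u) <= nu a.
Proof. by move=> hu; rewrite (nuM hK) ler_piMr ?(nu_ge0 hK). Qed.

Lemma nuD_le x y e : nu x <= e -> nu y <= e -> nu (x + y) <= e.
Proof. by move=> hx hy; apply: le_trans (nu_ultra hK x y) _; rewrite ge_max hx hy. Qed.

Lemma nuD_lt x y e : nu x < e -> nu y < e -> nu (x + y) < e.
Proof. by move=> hx hy; apply: le_lt_trans (nu_ultra hK x y) _; rewrite gt_max hx hy. Qed.

Lemma nu_sum_lt (I : Type) (r : seq I) (P : pred I) (F : I -> K) e :
  0 < e -> (forall i, P i -> nu (F i) < e) -> nu (\sum_(i <- r | P i) F i) < e.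
Proof.
move=> e0 h; apply: (big_ind (fun x => nu x < e)) => //; first by rewrite nu0.
by move=> ? ?; apply: nuD_lt.
Qed.

Lemma nu_nat_le1 n : nu n%:R <= 1.
Proof.
elim: n => [|n IH]; first by rewrite nu0.
by rewrite -addn1 natrD; apply: nuD_le; rewrite ?nu1.
Qed.

Lemma nu_dvd_le m n : (p ^ m %| n)%N -> nu n%:R <= p%:R^-1 ^+ m.
Proof.
case/dvdnP => q ->; rewrite natrM (nuM hK) natrX nuX (nu_p hK).
by rewrite ler_piMl ?nu_nat_le1 // exprn_ge0 // invr_ge0.
Qed.

Lemma nu_natB_eqmod a b m : a = b %[mod p ^ m] -> nu (a%:R - b%:R) <= p%:R^-1 ^+ m.
Proof.
move=> eqab; rewrite (divn_eq a (p ^ m)) (divn_eq b (p ^ m)) eqab !natrD.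
rewrite opprD addrACA subrr addr0.
by apply: nuD_le; rewrite ?nuN; apply/nu_dvd_le/dvdn_mull.
Qed.

(* Bezout gives [1 = t p - a n] with [nu (t p) < 1], forcing [nu n = 1]. *)
Lemma nu_coprime_p n : coprime p n -> nu n%:R = 1.
Proof.
move=> cop; apply/eqP; rewrite eq_le nu_nat_le1 /= leNgt; apply/negP => nun_lt1.
have [a _] := Bezoutl n (prime_gt0 p_prime); rewrite (eqP cop) => /dvdnP [t et].
have one_tp_an : 1 = (t * p)%:R - (a * n)%:R :> K by rewrite -et natrD addrK.
have : nu (1 : K) < 1.
  rewrite one_tp_an; apply: nuD_lt; rewrite ?nuN natrM (nuM hK).
    rewrite (nu_p hK); apply: le_lt_trans (ler_piMl _ (nu_nat_le1 t)) _.
      by rewrite invr_ge0.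
    by rewrite invf_lt1 ?ltr1n ?prime_gt1 // ltr0n prime_gt0.
  exact: le_lt_trans (ler_piMl (nu_ge0 hK _) (nu_nat_le1 a)) nun_lt1.
by rewrite nu1 ltxx.
Qed.

Lemma nu_nat_gt0 n : (0 < n)%N -> 0 < nu n%:R.
Proof.
move=> n0; have [m cop ->] := pfactor_coprime p_prime n0.
rewrite natrM (nuM hK) nu_coprime_p // mul1r natrX nuX (nu_p hK).
by rewrite exprn_gt0 // invr_gt0 ltr0n prime_gt0.
Qed.

Lemma Cp_char0 : has_char0 K.
Proof.
apply/pcharf0P => -[|n]; first by rewrite !eqxx.
suff /negPf -> : n.+1%:R != 0 :> K by [].
by apply: contraTneq (nu_nat_gt0 (ltn0Sn n)) => ->; rewrite nu0 ltxx.
Qed.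

Lemma nu_fact n : nu n`!%:R <= p%:R^-1 ^+ (n %/ p).
Proof.
elim: n => [|n IH]; first by rewrite div0n nu1.
rewrite factS natrM (nuM hK) divnS ?prime_gt0 // exprD.
case: (boolP (p %| n.+1)%N) => [pn|_] /=.
  by rewrite expr1 ler_pM ?(nu_ge0 hK) // -[p%:R^-1]expr1 nu_dvd_le ?expn1.
by rewrite expr0 mul1r (le_trans _ IH) // ler_piMl ?(nu_ge0 hK) ?nu_nat_le1.
Qed.

Lemma pinvX_lt (e : R) : 0 < e ->
  exists m, forall n, (m <= n)%N -> p%:R^-1 ^+ n < e.
Proof.
move=> e0; pose m := Num.Def.archi_bound e^-1; exists m => n mn.
have e1_lt_m : e^-1 < m%:R by apply: archi_boundP; rewrite invr_ge0 ltW.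
have m_lt_pn : (m < p ^ n)%N by apply: leq_ltn_trans mn (ltn_expl _ (prime_gt1 _)).
rewrite exprVn -natrX -[e]invrK ltf_pV2 ?posrE ?invr_gt0 ?ltr0n ?expn_gt0 ?prime_gt0 //.
by apply: lt_trans e1_lt_m _; rewrite ltr_nat.
Qed.

Lemma nu_fact_lt (e : R) : 0 < e -> exists N, forall n, (N <= n)%N -> nu n`!%:R < e.
Proof.
move=> e0; have [m hm] := pinvX_lt e0; exists (m * p)%N => n hn.
by apply: le_lt_trans (nu_fact n) (hm _ _); rewrite leq_divRL ?prime_gt0.
Qed.

Definition vanishing (a : nat -> K) :=
  forall e : R, 0 < e -> exists N, forall n, (N <= n)%N -> nu (a n) < e.

Lemma nu_lim_unique u l1 l2 : nu_lim nu u l1 -> nu_lim nu u l2 -> l1 = l2.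
Proof.
move=> h1 h2; apply/eqP; rewrite -subr_eq0; apply/eqP/(nu_eq0 hK)/eqP.
rewrite eq_le (nu_ge0 hK) andbT; apply/ler_addgt0Pr => e e0; rewrite add0r.
have [N1 H1] := h1 e e0; have [N2 H2] := h2 e e0; pose n := maxn N1 N2.
rewrite -(subrKA (u n)) ltW //; apply: nuD_lt; last rewrite nu_distC.
  by apply: H1; rewrite leq_maxl.
by apply: H2; rewrite leq_maxr.
Qed.

Lemma ssum_eq a l : series_to nu a l -> ssum nu a = l.
Proof.
move=> h; apply: (nu_lim_unique (u := fun n => \sum_(k < n) a k)) => //.
by apply: (epsilon_spec (inhabits 0) (series_to nu a)); exists l.
Qed.

Lemma nu_partial_sumB_lt a n m (e : R) : (n <= m)%N -> 0 < e ->
  (forall k, (n <= k)%N -> nu (a k) < e) ->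
  nu (\sum_(k < m) a k - \sum_(k < n) a k) < e.
Proof.
move=> nm e0 h; rewrite -(subnKC nm) big_split_ord /= addrAC subrr add0r.
by apply: nu_sum_lt => // i _; apply: h; apply: leq_addr.
Qed.

Lemma series_to_ssum a : vanishing a -> series_to nu a (ssum nu a).
Proof.
move=> va; suff [l hl] : exists l, series_to nu a l by rewrite (ssum_eq hl).
apply: (nu_complete hK) => e e0; have [N HN] := va e e0; exists N.
suff key m n : (N <= n)%N -> (n <= m)%N -> nu (\sum_(k < m) a k - \sum_(k < n) a k) < e.
  move=> m n Nm Nn; have [nm|mn] := leqP n m; first exact: key.
  by rewrite nu_distC; apply: key => //; apply: ltnW.
move=> Nn nm; apply: nu_partial_sumB_lt => // k nk.
by apply: HN; apply: leq_trans nk.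
Qed.

Lemma nu_series_tail_lt a l N (e : R) : series_to nu a l -> 0 < e ->
  (forall n, (N <= n)%N -> nu (a n) < e) -> nu (l - \sum_(k < N) a k) < e.
Proof.
move=> hl e0 HN; have [M HM] := hl e e0; pose m := maxn M N.
rewrite -(subrKA (\sum_(k < m) a k)); apply: nuD_lt.
  by apply: HM; rewrite leq_maxl.
by apply: nu_partial_sumB_lt; rewrite ?leq_maxr.
Qed.

Lemma series_to_mull c a l : series_to nu a l ->
  series_to nu (fun n => c * a n) (c * l).
Proof.
move=> hl e e0; have c1 : 0 < nu c + 1 by rewrite ltr_wpDl ?(nu_ge0 hK).
have [N HN] := hl (e / (nu c + 1)) (divr_gt0 e0 c1); exists N => n Nn.
rewrite -mulr_sumr -mulrBr (nuM hK).
apply: le_lt_trans (_ : (nu c + 1) * nu (l - \sum_(k < n) a k) < e).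
  by rewrite ler_wpM2r ?(nu_ge0 hK) // lerDl.
by rewrite mulrC -ltr_pdivlMr //; apply: HN.
Qed.

Lemma ssum_mull c a l : c != 0 -> series_to nu (fun n => c * a n) l ->
  c * ssum nu a = l.
Proof.
move=> c0 /(series_to_mull c^-1).
have -> : (fun n => c^-1 * (c * a n)) = a.
  by apply: functional_extensionality => n; rewrite mulKf.
by move/ssum_eq ->; rewrite mulVKf.
Qed.

Lemma ssum_mulr c a l : series_to nu a l -> ssum nu (fun n => a n * c) = l * c.
Proof.
move/(series_to_mull c).
have -> : (fun n => c * a n) = (fun n => a n * c).
  by apply: functional_extensionality => n; rewrite mulrC.
by move/ssum_eq ->; rewrite mulrC.
Qed.

Lemma sum_antidiag (f : nat -> nat -> K) N :
  \sum_(n < N) \sum_(i < n.+1) f i (n - i)%N = \sum_(k < N) \sum_(j < N - k) f k j.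
Proof.
elim: N => [|N IH]; first by rewrite !big_ord0.
rewrite big_ord_recr /= IH.
rewrite [RHS](eq_bigr (fun k : 'I_N.+1 => \sum_(j < N - k) f k j + f k (N - k)%N)).
  by rewrite big_split /= [in RHS]big_ord_recr /= subnn big_ord0 addr0.
by move=> i _; rewrite subSn ?big_ord_recr // -ltnS.
Qed.

Lemma ssum_antidiag (f : nat -> nat -> K) :
  (forall e : R, 0 < e -> exists N, forall k j, (N <= k + j)%N -> nu (f k j) < e) ->
  ssum nu (fun k => ssum nu (f k)) = ssum nu (fun n => \sum_(i < n.+1) f i (n - i)%N).
Proof.
move=> hf; set g := fun n => \sum_(i < n.+1) f i (n - i)%N.
have rows_vanish k : vanishing (f k).
  move=> e e0; have [N HN] := hf e e0; exists N => n Nn.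
  by apply: HN; apply: leq_trans Nn (leq_addl _ _).
have g_vanish : vanishing g.
  move=> e e0; have [N HN] := hf e e0; exists N => n Nn.
  by apply: nu_sum_lt => // i _; apply: HN; rewrite subnKC // -ltnS.
apply: ssum_eq => e e0; have [N0 H0] := hf e e0.
have [N1 H1] := series_to_ssum g_vanish e0.
exists (maxn N0 N1) => N; rewrite geq_max => /andP [N0N N1N].
rewrite -(subrKA (\sum_(n < N) g n)) {2}sum_antidiag -sumrB; apply: nuD_lt.
  exact: H1.
apply: nu_sum_lt => // k _; rewrite nu_distC.
apply: nu_series_tail_lt => //; first exact: series_to_ssum (rows_vanish k).
move=> j; rewrite -(leq_add2l k) subnKC => [kj|]; last exact: ltnW.
by apply: H0; apply: leq_trans kj.
Qed.

(* [Negz m = -(m + 1)] is congruent to [p^M (m + 1) - (m + 1)] modulo [p^M]. *)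
Lemma isZp_nat y (e : R) : isZp nu y -> 0 < e -> exists n : nat, nu (y - n%:R) < e.
Proof.
move=> hy e0; have [[n|m] hm] := hy e e0; first by exists n.
have [M /(_ M (leqnn M)) hM] := pinvX_lt e0.
have m_le : (m.+1 <= p ^ M * m.+1)%N by rewrite leq_pmull // expn_gt0 prime_gt0.
exists (p ^ M * m.+1 - m.+1)%N.
have -> : y - (p ^ M * m.+1 - m.+1)%N%:R = (y - (Negz m)%:~R) - (p ^ M * m.+1)%N%:R.
  by rewrite natrB // NegzE mulrNz; ring.
apply: nuD_lt => //; rewrite nuN; apply: le_lt_trans hM.
exact/nu_dvd_le/dvdn_mulr.
Qed.

Lemma isZp_le1 y : isZp nu y -> nu y <= 1.
Proof.
move=> hy; have [n hn] := isZp_nat hy ltr01.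
by rewrite -(subrK n%:R y); apply: nuD_le; [exact: ltW | exact: nu_nat_le1].
Qed.

Lemma falling_le1 x n : nu x <= 1 -> nu (falling x n) <= 1.
Proof.
move=> hx; elim: n => [|n IH]; first by rewrite falling0 nu1.
rewrite fallingS (nuM hK) mulr_ile1 ?(nu_ge0 hK) //.
by apply: nuD_le; rewrite ?nuN ?nu_nat_le1.
Qed.

Lemma falling_lipschitz x z n : nu x <= 1 -> nu z <= 1 ->
  nu (falling x n - falling z n) <= nu (x - z).
Proof.
move=> hx hz; elim: n => [|n IH]; first by rewrite !falling0 subrr nu0 (nu_ge0 hK).
have -> : falling x n.+1 - falling z n.+1 =
    (falling x n - falling z n) * (x - n%:R) + falling z n * (x - z).
  by rewrite !fallingS; ring.
apply: nuD_le; rewrite (nuM hK).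
  rewrite (le_trans _ IH) // ler_piMr ?(nu_ge0 hK) //.
  by apply: nuD_le; rewrite ?nuN ?nu_nat_le1.
by rewrite ler_piMl ?(nu_ge0 hK) ?falling_le1.
Qed.

Lemma binomK_le1 y k : isZp nu y -> nu (binomK y k) <= 1.
Proof.
move=> hy; have [n hn] := isZp_nat hy (nu_nat_gt0 (fact_gt0 k)).
rewrite -(subrK (binomK n%:R k) (binomK y k)); apply: nuD_le; last first.
  by rewrite binomK_nat ?nu_nat_le1 //; exact: Cp_char0.
rewrite /binomK -mulrBl (nuM hK) nuV ler_pdivrMr ?nu_nat_gt0 ?fact_gt0 // mul1r.
apply: le_trans (ltW hn); rewrite -!/(falling _ _).
by apply: falling_lipschitz; [exact: isZp_le1 | exact: nu_nat_le1].
Qed.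

Lemma isZp_N1subn n : isZp nu (-1 - n%:R).
Proof. by move=> e e0; exists (Negz n); rewrite intr_Negz subrr nu0. Qed.

Lemma contZp_locally_bounded phi x : contZp nu phi -> isZp nu x ->
  exists2 d : R, 0 < d &
    forall z, isZp nu z -> nu (z - x) < d -> nu (phi z) <= Num.max 1 (nu (phi x)).
Proof.
move=> hphi hx; have [d d0 hd] := hphi x hx 1 ltr01; exists d => // z hz zx.
rewrite -(subrK (phi x) (phi z)); apply: nuD_le; rewrite le_max ?lexx ?orbT //.
by rewrite ltW ?hd.
Qed.

(* Compactness of Z_p: if phi were unbounded on -1 - N, nested residue classes
   on which it is unbounded would shrink to a point of Z_p where phi is not
   continuous. *)
Lemma contZp_bounded phi : contZp nu phi ->
  exists M, forall n : nat, nu (phi (-1 - n%:R)) <= M.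
Proof.
move=> hphi; apply: NNPP => bounded.
have unb M : exists n : nat, M < nu (phi (-1 - n%:R)).
  apply: NNPP => h; apply: bounded; exists M => n.
  by rewrite leNgt; apply/negP => lt; apply: h; exists n.
have [cs [cs_unb cs_coh]] := unbounded_nested_classes (prime_gt1 p_prime) unb.
have cs_lt m : (cs m < p ^ m)%N.
  by apply: unbounded_on_class_lt (cs_unb m); rewrite expn_gt0 prime_gt0.
pose xs m := -1 - (cs m)%:R : K.
have xs_near m m' : (m <= m')%N -> nu (xs m' - xs m) <= p%:R^-1 ^+ m.
  move=> mm'; have -> : xs m' - xs m = (cs m)%:R - (cs m')%:R by rewrite /xs; ring.
  exact/nu_natB_eqmod/esym/cs_coh.
have [x hx] : exists x, nu_lim nu xs x.
  apply: (nu_complete hK) => e e0; have [M hM] := pinvX_lt e0; exists M => m n Mm Mn.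
  rewrite -(subrKA (xs M)); apply: nuD_lt; last rewrite nu_distC;
    by apply: le_lt_trans (xs_near _ _ _) (hM M (leqnn M)).
have Zx : isZp nu x.
  by move=> e e0; have [N hN] := hx e e0; exists (Negz (cs N)); rewrite intr_Negz hN.
have [d d0 hd] := contZp_locally_bounded hphi Zx.
have [M0 hM0] := pinvX_lt d0; have [N hN] := hx d d0; pose m := maxn M0 N.
have [n [n_cs lt_n]] := cs_unb m (Num.max 1 (nu (phi x))).
suff : nu (-1 - n%:R - x) < d by move/(hd _ (isZp_N1subn n)); rewrite leNgt lt_n.
have -> : -1 - n%:R - x = ((cs m)%:R - n%:R) + (xs m - x) by rewrite /xs; ring.
apply: nuD_lt; last by rewrite nu_distC hN ?leq_maxr.
apply: le_lt_trans (hM0 m (leq_maxl _ _)); apply: nu_natB_eqmod.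
by rewrite /= modn_small.
Qed.

Lemma vanishing_fact_mul phi : contZp nu phi ->
  vanishing (fun n => n`!%:R * phi (-1 - n%:R)).
Proof.
move=> /contZp_bounded [M hM] e e0; have M1 : 0 < Num.max M 1 by rewrite lt_max ltr01 orbT.
have [N hN] := nu_fact_lt (divr_gt0 e0 M1); exists N => n Nn.
rewrite (nuM hK); apply: le_lt_trans (_ : nu n`!%:R * Num.max M 1 < e).
  by rewrite ler_wpM2l ?(nu_ge0 hK) // (le_trans (hM n)) // le_max lexx.
by rewrite -ltr_pdivlMr // hN.
Qed.

Lemma vanishing_antidiag_binomK (b : nat -> K) y s : vanishing b ->
  isZp nu y -> isZp nu s -> forall e : R, 0 < e -> exists N, forall k j,
    (N <= k + j)%N -> nu (b (k + j)%N * binomK y j * binomK s k) < e.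
Proof.
move=> bv hy hs e e0; have [N hN] := bv e e0; exists N => k j kj.
apply: le_lt_trans (hN _ kj).
exact: le_trans (nu_mull_le1 _ (binomK_le1 k hs)) (nu_mull_le1 _ (binomK_le1 j hy)).
Qed.

Lemma T_summand_S_op phi y s k : contZp nu phi -> isZp nu y ->
  k`!%:R * S_op nu y phi (-1 - k%:R) * binomK s k =
  ssum nu (fun j => (k + j)`!%:R * phi (-1 - (k + j)%N%:R) * binomK y j * binomK s k).
Proof.
move=> hphi hy; pose g j := (k + j)`!%:R * phi (-1 - (k + j)%N%:R) * binomK y j.
have g_vanish : vanishing g.
  move=> e e0; have [N hN] := vanishing_fact_mul hphi e0; exists N => j Nj.
  apply: le_lt_trans (hN _ (leq_trans Nj (leq_addl _ _))).
  exact: nu_mull_le1 (binomK_le1 j hy).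
pose t j := (-1) ^+ j * j`!%:R * binomK y j * binomK (-1 - k%:R) j * phi (-1 - k%:R - j%:R).
have kt_g : (fun j => k`!%:R * t j) = g.
  apply: functional_extensionality => j; rewrite /t /g -(fact_binomKN1 Cp_char0).
  by rewrite natrD opprD addrA; ring.
have := series_to_ssum g_vanish; rewrite -{1}kt_g => kt_sum.
by rewrite /S_op -/t (ssum_mull (natf_fact_neq0 Cp_char0 k) kt_sum) (ssum_mulr _ (series_to_ssum g_vanish)).
Qed.

End Valuation.

Theorem corollary6p5 (p : nat) (K : closedFieldType) (R : realType) (nu : K -> R)
  (hp : prime p) (hK : is_Cp nu p)
  (phi : K -> K) (hphi : contZp nu phi)
  (y s : K) (hy : isZp nu y) (hs : isZp nu s) :
  T_op nu (S_op nu y phi) s = T_op nu phi (s + y).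
Proof.
have summand k := T_summand_S_op hp hK s k hphi hy.
rewrite /T_op (functional_extensionality _ _ summand) (ssum_antidiag hK) //; last first.
  exact: (vanishing_antidiag_binomK hp hK (vanishing_fact_mul hp hK hphi) hy hs).
congr (ssum nu _); apply: functional_extensionality => n.
rewrite (binomK_vandermonde (Cp_char0 hp hK)) mulr_sumr; apply: eq_bigr => i _.
by rewrite subnKC -1?ltnS //; ring.
Qed.
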